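(* Let $T$ be a tree with $n$ vertices. Then \[ \mathcal{V}_2^*(T^\ell,n-1)=\big\{E(P_{u,v})\cup\{ww\mid w\notin V(P_{u,v})\}\;\big|\; u\neq v \text{ are leaves of } T\big\}, \] where $P_{u,v}$ is the unique path in $T$ joining $u$ and $v$.
   Context: A $2$-matching of a graph (loops allowed) is a set $\mathcal{M}$ of edges such that every vertex is incident to at most two edges of $\mathcal{M}$ (a loop counts twice for incidence but as one edge). $T^\ell$ is $T$ with a loop $ww$ added at each vertex $w$; $\ell(\mathcal{M})$ is the set of loops in $\mathcal{M}$. A $2$-matching $\mathcal{M}$ of $T^\ell$ is minimal if there is no $2$-matching $\mathcal{M}'$ of $T^\ell$ with $|\mathcal{M}'|=|\mathcal{M}|$ and $\ell(\mathcal{M}')\subsetneq\ell(\mathcal{M})$; $\mathcal{V}_2^*(T^\ell,j)$ is the set of minimal $2$-matchings of $T^\ell$ with exactly $j$ edges. *)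

From mathcomp Require Import all_boot.
Set Implicit Arguments. Unset Strict Implicit. Unset Printing Implicit Defensive.

(* Tree: simple, connected and acyclic (no simple cycle of length >= 3). *)
Definition simple_graph (V : finType) (e : rel V) : Prop :=
  irreflexive e /\ symmetric e.

Definition has_cycle (V : finType) (e : rel V) : Prop :=
  exists (x : V) (p : seq V),
    [/\ 2 <= size p, path e x p, e (last x p) x & uniq (x :: p)].

Definition is_tree (V : finType) (e : rel V) : Prop :=
  [/\ simple_graph e, (forall x y : V, connect e x y) & ~ has_cycle e].

Definition leaf (V : finType) (e : rel V) (x : V) : bool :=
  #|[set y | e x y]| == 1.

(* Edges of T^l are represented as vertex sets: the loop ww is [set w],
   a tree edge xy is [set x; y]. *)
Definition tree_edge (V : finType) (e : rel V) (f : {set V}) : bool :=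
  [exists x, exists y, e x y && (f == [set x; y])].

Definition loop_edge (V : finType) (f : {set V}) : bool :=
  [exists w, f == [set w]].

Definition edge_Tl (V : finType) (e : rel V) (f : {set V}) : bool :=
  loop_edge f || tree_edge e f.

Definition incidence (V : finType) (M : {set {set V}}) (w : V) : nat :=
  \sum_(f in M | w \in f) (if #|f| == 1 then 2 else 1).

Definition two_matching (V : finType) (e : rel V) (M : {set {set V}}) : bool :=
  [forall f in M, edge_Tl e f] && [forall w, incidence M w <= 2].

Definition loops (V : finType) (M : {set {set V}}) : {set {set V}} :=
  [set f in M | loop_edge f].

Definition minimal_two_matching (V : finType) (e : rel V) (M : {set {set V}})
  : Prop :=
  two_matching e M /\
  ~ (exists M' : {set {set V}},
        [/\ two_matching e M', #|M'| = #|M| & loops M' \proper loops M]).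

Definition V2star (V : finType) (e : rel V) (j : nat) (M : {set {set V}})
  : Prop :=
  minimal_two_matching e M /\ #|M| = j.

(* p is a (simple) path in T from u to v, given as u :: p *)
Definition simple_path (V : finType) (e : rel V) (u v : V) (p : seq V) : bool :=
  [&& path e u p, last u p == v & uniq (u :: p)].

Definition path_edges (V : finType) (u : V) (p : seq V) : {set {set V}} :=
  [set [set x.1; x.2] | x in zip (u :: p) p].

Definition loops_off (V : finType) (u : V) (p : seq V) : {set {set V}} :=
  [set [set w] | w : V & w \notin u :: p].

From mathcomp Require Import all_boot zify.

(* Every edge of T^l uses two units of incidence, so a 2-matching M with n - 1
   edges leaves a total deficit sum_w (2 - inc_M w) = 2.  The tree edges of M
   form vertex-disjoint paths: both ends of a maximal one have deficit at least
   1, and an isolated vertex without loop has deficit 2.  Hence the deficient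
   vertices are exactly the ends of one path P, every other vertex carries a
   loop, and M = E(P) + {ww | w notin V(P)}.  Among such sets, fewer loops
   means a path through strictly more vertices; since a path of a tree is
   determined by its ends, M is minimal iff both ends of P are leaves. *)

Set Implicit Arguments. Unset Strict Implicit. Unset Printing Implicit Defensive.

Lemma set2_eq (T : finType) (a b c d : T) :
  [set a; b] = [set c; d] -> (a = c /\ b = d) \/ (a = d /\ b = c).
Proof.
move=> E; have /set2P[ac|ad] : a \in [set c; d] by rewrite -E set21.
- left; split=> //; have /set2P[bc|//] : b \in [set c; d] by rewrite -E set22.
  have /set2P[da|db] : d \in [set a; b] by rewrite E set22.
    by rewrite bc da ac.
  by rewrite db.
- right; split=> //; have /set2P[//|bd] : b \in [set c; d] by rewrite -E set22.
  have /set2P[ca|cb] : c \in [set a; b] by rewrite E set21.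
    by rewrite bd ca ad.
  by rewrite cb.
Qed.

Section SimplePaths.
Variables (V : finType) (r : rel V).

Lemma size_simple_path (u : V) p : uniq (u :: p) -> size p < #|V|.
Proof. by move=> up; have := max_card (mem (u :: p)); rewrite (card_uniqP up). Qed.

Lemma simple_path_rev (u : V) p : symmetric r -> path r u p -> uniq (u :: p) ->
  exists q, [/\ path r (last u p) q, uniq (last u p :: q), last (last u p) q = u,
                (last u p :: q) =i (u :: p) & size q = size p].
Proof.
move=> rsym pp up; exists (rev (belast u p)).
have revE : last u p :: rev (belast u p) = rev (u :: p).
  by rewrite [u :: p]lastI rev_rcons.
split.
- by rewrite rev_path; apply: sub_path pp => x y; rewrite rsym.
- by rewrite revE rev_uniq.
- by rewrite -[last _ _](last_cons u) revE rev_cons last_rcons.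
- by move=> w; rewrite revE mem_rev.
- by rewrite size_rev size_belast.
Qed.

Definition longest_path (w z : V) (t : seq V) :=
  [/\ path r z t, uniq (z :: t), w \in z :: t &
      forall z' t', path r z' t' -> uniq (z' :: t') -> w \in z' :: t' ->
        size t' <= size t].

Lemma longest_path_exists w : exists z t, longest_path w z t.
Proof.
(* Paths of length k are k-tuples, so "some such path exists" is decidable. *)
pose P k := [exists z, exists t : k.-tuple V,
               [&& path r z t, uniq (z :: t) & w \in z :: t]].
have P0 : exists k, P k.
  by exists 0; apply/existsP; exists w; apply/existsP; exists [tuple]; rewrite /= inE.
have Pub k : P k -> k <= #|V|.
  case/existsP=> z /existsP[t /and3P[_ zt _]].
  by rewrite -(size_tuple t) ltnW // (size_simple_path zt).
case: (ex_maxnP P0 Pub) => k /existsP[z /existsP[t /and3P[zt ut wt]]] kmax.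
exists z, t; split=> // z' t' zt' ut' wt'; rewrite size_tuple; apply: kmax.
by apply/existsP; exists z'; apply/existsP; exists (in_tuple t'); rewrite zt' ut'.
Qed.

Lemma longest_path_rev w z t : symmetric r -> longest_path w z t ->
  exists t', longest_path w (last z t) t'.
Proof.
move=> rsym [zt ut wt tmax].
have [t' [zt' ut' _ eqt' st']] := simple_path_rev rsym zt ut.
by exists t'; split=> //; rewrite ?eqt' ?st'.
Qed.

End SimplePaths.

Section AcyclicPaths.
Variables (V : finType) (e : rel V).
Hypotheses (e_sym : symmetric e) (acyclic : ~ has_cycle e).

Lemma acyclic_nbr_on_path z t y : path e z t -> uniq (z :: t) -> y \in t ->
  e y z -> y = head z t.
Proof.
move=> zt ut yt eyz; case/splitPr: yt zt ut => t1 t2.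
case: t1 => [//|x t1] zt ut; exfalso; apply: acyclic.
exists z, (rcons (x :: t1) y); split.
- by rewrite size_rcons.
- by move: zt; rewrite rcons_path cat_path => /andP[-> /andP[]].
- by rewrite last_rcons.
- move: ut; rewrite -cat_rcons cons_uniq cat_uniq mem_cat => /andP[/norP[zn _] /andP[u _]].
  by rewrite cons_uniq zn.
Qed.

Lemma acyclic_path_unique p : forall u q, path e u p -> uniq (u :: p) ->
  path e u q -> uniq (u :: q) -> last u p = last u q -> p = q.
Proof.
elim: p => [|x p IH] u [|y q] //=.
- by move=> _ _ _ /andP[uq _] lq; move: uq; rewrite lq mem_last.
- by move=> _ /andP[up _] _ _ lp; move: up; rewrite -lp mem_last.
move=> /andP[eux px] /andP[uxp uxp'] /andP[euy qy] /andP[uyq uyq'] lpq.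
have [exy|xy] := eqVneq x y; first by subst y; rewrite (IH x q).
exfalso.
have xq : x \notin y :: q.
  apply/negP => xq; have /= := acyclic_nbr_on_path (z := u) (t := y :: q) _ _ xq.
  rewrite /= euy qy uyq uyq' e_sym eux => /(_ erefl erefl erefl) xy'.
  by rewrite xy' eqxx in xy.
have x_uyq : path e x (u :: y :: q) by rewrite /= e_sym eux euy.
have u_xuyq : uniq [:: x, u, y & q].
  rewrite /= uyq uyq' inE negb_or xq andbT andbC /=.
  by apply: contra uxp; rewrite eq_sym => /eqP ->; rewrite inE eqxx.
have := IH x _ px uxp' x_uyq u_xuyq lpq.
by move=> pE; move: uxp; rewrite pE !inE eqxx orbT.
Qed.

Lemma acyclic_path_ends z t z' t' :
  path e z t -> uniq (z :: t) -> path e z' t' -> uniq (z' :: t') ->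
  [set z; last z t] = [set z'; last z' t'] -> (z :: t) =i (z' :: t').
Proof.
move=> zt ut zt' ut' /set2_eq[[zz' ends]|[zl lz]].
  by subst z'; rewrite (acyclic_path_unique zt ut zt' ut' ends).
have [s [zs us ls eqs _]] := simple_path_rev e_sym zt' ut'.
move: zs us ls eqs; rewrite -zl => zs us ls eqs w.
by rewrite -eqs (acyclic_path_unique zt ut zs us) // ls.
Qed.

Lemma longest_path_start (r : rel V) w z t y :
  irreflexive r -> symmetric r -> subrel r e ->
  longest_path r w z t -> r z y -> y \in t /\ y = head z t.
Proof.
move=> rirr rsym re [zt ut wt tmax] rzy.
have yt : y \in t.
  have : y \in z :: t.
    apply/negPn/negP => yzt; have := tmax y (z :: t).
    rewrite /= rsym rzy zt yzt -cons_uniq ut in_cons wt orbT => /(_ isT isT isT).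
    by rewrite ltnn.
  by rewrite in_cons => /orP[/eqP yz|//]; rewrite yz rirr in rzy.
split=> //; apply: acyclic_nbr_on_path (sub_path re zt) ut yt _.
by rewrite e_sym re.
Qed.

End AcyclicPaths.

Section PathMatching.
Variables (V : finType) (e : rel V).
Hypothesis e_irr : irreflexive e.

Lemma path_edges_nil (u : V) : path_edges u [::] = set0.
Proof. by apply/setP => f; rewrite inE; apply/imsetP => -[]. Qed.

Lemma path_edges_cons (u x : V) p :
  path_edges u (x :: p) = [set u; x] |: path_edges x p.
Proof.
apply/setP => f; rewrite !inE /path_edges; apply/imsetP/orP => [[[a b] + ->]|].
  rewrite in_cons => /orP[/eqP[-> ->]|ab]; first by left.
  by right; apply: imset_f.
case=> [/eqP->|/imsetP[ab abp ->]]; first by exists (u, x); first exact: mem_head.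
by exists ab; rewrite // in_cons abp orbT.
Qed.

Lemma path_edgesP (r : rel V) u p f : path r u p -> f \in path_edges u p ->
  exists x y, r x y /\ f = [set x; y].
Proof.
elim: p u => [|x p IH] u; first by rewrite path_edges_nil inE.
rewrite path_edges_cons /= => /andP[rux xp] /setU1P[->|]; first by exists u, x.
exact: IH.
Qed.

Lemma path_edges_vertex (u : V) p f w :
  f \in path_edges u p -> w \in f -> w \in u :: p.
Proof.
elim: p u => [|x p IH] u; first by rewrite path_edges_nil inE.
rewrite path_edges_cons => /setU1P[-> /set2P[->|->]|/IH fw /fw wxp].
- exact: mem_head.
- by rewrite !inE eqxx orbT.
- by rewrite in_cons wxp orbT.
Qed.

Lemma card_path_edge u p f : path e u p -> f \in path_edges u p -> #|f| = 2.
Proof.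
move=> up /(path_edgesP up)[x [y [exy ->]]].
by rewrite cards2; case: eqP exy => // ->; rewrite e_irr.
Qed.

Lemma card_path_edges u p : path e u p -> uniq (u :: p) ->
  #|path_edges u p| = size p.
Proof.
elim: p u => [|x p IH] u; first by rewrite path_edges_nil cards0.
move=> /= /andP[_ xp] /andP[up uxp]; rewrite path_edges_cons cardsU1 IH //.
suff -> : [set u; x] \notin path_edges x p by [].
by apply: contra up => /path_edges_vertex; apply; rewrite set21.
Qed.

Lemma path_edges_at (u : V) p w : uniq (u :: p) ->
  #|[set f in path_edges u p | w \in f]| <= (w != u).+1.
Proof.
elim: p u => [|x p IH] u.
  move=> _; rewrite (_ : [set f in _ | _] = set0) ?cards0 //.
  by apply/setP => f; rewrite path_edges_nil !inE.
move=> /andP[up uxp].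
have -> : [set f in path_edges u (x :: p) | w \in f] =
          [set f in [set [set u; x]] | w \in f] :|: [set f in path_edges x p | w \in f].
  by apply/setP => f; rewrite path_edges_cons !inE andb_orl.
apply: leq_trans (leq_card_setU _ _) _.
have -> : #|[set f in [set [set u; x]] | w \in f]| = (w \in [set u; x]).
  case: (boolP (w \in [set u; x])) => wux.
    rewrite (_ : [set f in _ | _] = [set [set u; x]]) ?cards1 //.
    by apply/setP => f; rewrite !inE; case: eqP => // ->.
  apply/eqP; rewrite /= cards_eq0; apply/eqP/setP => f.
  by rewrite !inE; case: eqP => // ->; rewrite (negbTE wux).
have [->|wu] := eqVneq w u.
  rewrite set21 (_ : [set f in path_edges x p | u \in f] = set0) ?cards0 //.
  apply/setP => f; rewrite !inE; apply/negP => /andP[/path_edges_vertex fx /fx].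
  by apply/negP.
have := IH x uxp; rewrite in_set2 (negbTE wu) /=.
by case: eqVneq => [->|_]; rewrite ?eqxx /=; lia.
Qed.

Lemma loops_offP (u : V) p f :
  reflect (exists2 w, w \notin u :: p & f = [set w]) (f \in loops_off u p).
Proof. by apply: (iffP imsetP) => -[w wp ->]; exists w; rewrite // inE in wp *. Qed.

Lemma set1_loops_off (u : V) p w : ([set w] \in loops_off u p) = (w \notin u :: p).
Proof. by rewrite (mem_imset _ _ (@set1_inj _)) inE. Qed.

Lemma card_loops_off (u : V) p : uniq (u :: p) ->
  #|loops_off u p| = #|V| - (size p).+1.
Proof.
move=> up; rewrite card_imset; last exact: set1_inj.
rewrite -[(size p).+1]/(size (u :: p)) -(card_uniqP up).
rewrite -(cardC (mem (u :: p))) addKn.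
by apply: eq_card => w; rewrite !inE.
Qed.

Lemma eq_loops_off (u u' : V) p p' :
  (u :: p) =i (u' :: p') -> loops_off u p = loops_off u' p'.
Proof.
move=> eqp; apply/setP => f.
by apply/loops_offP/loops_offP => -[w]; exists w; rewrite // ?eqp // -eqp.
Qed.

Lemma loops_off_subset (u u' : V) p p' :
  loops_off u' p' \subset loops_off u p -> {subset u :: p <= u' :: p'}.
Proof.
move=> sub x xp; apply/negPn/negP => xp'.
by have := subsetP sub [set x]; rewrite !set1_loops_off xp xp' => /(_ isT).
Qed.

Lemma loops_off_proper (u u' w : V) p p' :
  {subset u :: p <= u' :: p'} -> w \in u' :: p' -> w \notin u :: p ->
  loops_off u' p' \proper loops_off u p.
Proof.
move=> sub wp' wp; apply/properP; split.
  apply/subsetP => f /loops_offP[x xp' ->]; rewrite set1_loops_off.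
  by apply: contra xp'; apply: sub.
by exists [set w]; rewrite !set1_loops_off ?wp ?wp'.
Qed.

Definition path_matching (u : V) p := path_edges u p :|: loops_off u p.

Lemma path_edges_loops_off (u : V) p f :
  path e u p -> f \in path_edges u p -> f \notin loops_off u p.
Proof.
move=> up fp; apply/loops_offP => -[w _ fw].
by have := card_path_edge up fp; rewrite fw cards1.
Qed.

Lemma loops_path_matching u p : path e u p ->
  loops (path_matching u p) = loops_off u p.
Proof.
move=> up; apply/setP => f; rewrite !inE /loop_edge.
case: (boolP (f \in path_edges u p)) => [fp|_] /=.
  rewrite (negbTE (path_edges_loops_off up fp)); apply/existsP => -[w /eqP fw].
  by have := card_path_edge up fp; rewrite fw cards1.
by case: (loops_offP _ _ _) => [[w _ ->]|//] /=; apply/existsP; exists w.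
Qed.

Lemma card_path_matching u p : path e u p -> uniq (u :: p) ->
  #|path_matching u p| = #|V| - 1.
Proof.
move=> up uu; rewrite cardsU card_path_edges // card_loops_off //.
rewrite (_ : _ :&: _ = set0) ?cards0 ?subn0.
  by have := size_simple_path uu; lia.
apply/setP => f; rewrite !inE; apply/negP => /andP[/(path_edges_loops_off up)].
by move/negP.
Qed.

Lemma incidence_path_matching u p w : path e u p -> uniq (u :: p) ->
  incidence (path_matching u p) w <= 2.
Proof.
move=> up uu; rewrite /incidence.
have [wp|wp] := boolP (w \in u :: p).
  rewrite (eq_bigl (mem [set f in path_edges u p | w \in f])); last first.
    move=> f; rewrite !inE andb_orl; case: (loops_offP _ _ _) => [[x xp ->]|] /=.
      by rewrite inE (negbTE (_ : w != x)) ?andbF //; apply: contraNneq xp => <-.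
    by rewrite orbF.
  rewrite (eq_bigr (fun=> 1)); last first.
    by move=> f /[!inE] /andP[fp _]; rewrite (card_path_edge up fp).
  by rewrite sum1_card (leq_trans (path_edges_at w uu)) // ltnS leq_b1.
rewrite (big_pred1 [set w]) ?cards1 // => f; rewrite !inE.
apply/andP/eqP => [[/orP[/path_edges_vertex fw /fw|/loops_offP[x _ ->]] //]|->].
- by rewrite (negbTE wp).
- by rewrite inE => /eqP ->.
- by rewrite set1_loops_off wp orbT inE.
Qed.

Lemma path_matching_two_matching u p : path e u p -> uniq (u :: p) ->
  two_matching e (path_matching u p).
Proof.
move=> up uu; apply/andP; split; last first.
  by apply/forallP => w; exact: incidence_path_matching.
apply/forall_inP => f /setUP[/(path_edgesP up)[x [y [exy ->]]]|/loops_offP[w _ ->]].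
  by apply/orP; right; apply/existsP; exists x; apply/existsP; exists y; rewrite exy eqxx.
by apply/orP; left; apply/existsP; exists w.
Qed.

End PathMatching.

Section Incidence.
Variables (V : finType) (e : rel V).
Hypotheses (e_irr : irreflexive e) (e_sym : symmetric e).

Lemma two_matchingP (M : {set {set V}}) :
  reflect ({in M, forall f, edge_Tl e f} /\ forall w, incidence M w <= 2)
          (two_matching e M).
Proof. by apply: (iffP andP) => -[/forall_inP edgesM /forallP incM]. Qed.

Lemma edge_TlP (f : {set V}) z : edge_Tl e f -> z \in f ->
  f = [set z] \/ exists2 y, e z y & f = [set z; y].
Proof.
case/orP => [/existsP[w /eqP->] /set1P->|/existsP[x /existsP[y /andP[exy /eqP->]]]].
  by left.
by case/set2P=> ->; right; [exists y | exists x; rewrite 1?e_sym // setUC].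
Qed.

Lemma card_edge_Tl (f : {set V}) : edge_Tl e f -> (#|f| == 1) || (#|f| == 2).
Proof.
case/orP => [/existsP[w /eqP->]|/existsP[x /existsP[y /andP[exy /eqP->]]]].
  by rewrite cards1.
by rewrite cards2 (_ : x != y) //; apply: contraTneq exy => ->; rewrite e_irr.
Qed.

Definition medge (M : {set {set V}}) x y := e x y && ([set x; y] \in M).

Lemma medge_sym M : symmetric (medge M).
Proof. by move=> x y; rewrite /medge e_sym setUC. Qed.

Lemma medge_irr M : irreflexive (medge M).
Proof. by move=> x; rewrite /medge e_irr. Qed.

Lemma medge_sub M : subrel (medge M) e.
Proof. by move=> x y /andP[]. Qed.

Lemma incidenceE (M : {set {set V}}) z : {in M, forall f, edge_Tl e f} ->
  incidence M z = ([set z] \in M).*2 + #|[set y | medge M z y]|.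
Proof.
move=> edgesM; rewrite /incidence (bigID (pred1 [set z])) /=; congr (_ + _).
  case: (boolP ([set z] \in M)) => zM.
    rewrite (big_pred1 [set z]) ?cards1 // => f; rewrite [pred1 _ _]/=.
    case: eqP => [->|fz]; last by rewrite andbF.
    by rewrite andbT; apply/andP; split; [exact: zM | exact: set11].
  rewrite big_pred0 // => f; case: eqP => [->|]; rewrite ?andbF // andbT.
  by apply/negbTE/nandP; left; exact: zM.
have neq_z y : e z y -> [set z; y] != [set z].
  by apply: contraTneq => /setP/(_ y); rewrite !inE eqxx orbT => /esym/eqP->; rewrite e_irr.
rewrite (eq_bigr (fun=> 1)); last first.
  move=> f /andP[/andP[fM zf] fz]; case: (edge_TlP (edgesM f fM) zf) => [fE|[y zy ->]].
    by rewrite fE eqxx in fz.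
  by rewrite cards2 (_ : z != y) //; apply: contraTneq zy => <-; rewrite e_irr.
rewrite sum1_card -(card_in_imset (f := fun y => [set z; y])).
  apply: eq_card => f; apply/idP/imsetP.
    case/andP=> /andP[fM zf] fz; case: (edge_TlP (edgesM f fM) zf) => [fE|[y zy fE]].
      by rewrite fE eqxx in fz.
    by exists y; rewrite // inE /medge zy -fE.
  case=> y /[!inE] /andP[zy zyM] ->; rewrite unfold_in /= neq_z // andbT.
  by apply/andP; split; [exact: zyM | exact: set21].
move=> y1 y2 /[!inE] /andP[zy1 _] /andP[zy2 _] /set2_eq[[_ //]|[zy _]].
by rewrite zy e_irr in zy2.
Qed.

Lemma loop_medge (M : {set {set V}}) z y :
  two_matching e M -> [set z] \in M -> ~~ medge M z y.
Proof.
case/two_matchingP=> edgesM incM zM; apply/negP => zy.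
have := incM z; rewrite incidenceE // zM (cardD1 y) inE zy.
by rewrite leqNgt.
Qed.

Lemma sum_incidence (M : {set {set V}}) : {in M, forall f, edge_Tl e f} ->
  \sum_w incidence M w = (#|M|).*2.
Proof.
move=> edgesM; rewrite /incidence.
under eq_bigr => w _ do rewrite big_mkcondr /=.
rewrite exchange_big /= -muln2 -sum_nat_const; apply: eq_bigr => f fM.
rewrite -big_mkcond /= sum_nat_const.
by case/orP: (card_edge_Tl (edgesM f fM)) => /eqP->.
Qed.

Definition deficit (M : {set {set V}}) (w : V) := 2 - incidence M w.

Lemma sum_deficit (M : {set {set V}}) :
  two_matching e M -> #|M| = #|V| - 1 -> 0 < #|V| -> \sum_w deficit M w = 2.
Proof.
case/two_matchingP=> edgesM incM cardM V0.
rewrite /deficit sumnB // sum_incidence // sum_nat_const cardM.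
by rewrite -[#|_| * 2]/(#|V| * 2); lia.
Qed.

Lemma deficit_subset (M : {set {set V}}) (S : {set V}) :
  two_matching e M -> #|M| = #|V| - 1 -> 0 < #|V| ->
  \sum_(w in S) deficit M w <= 2.
Proof.
move=> matchM cardM V0; rewrite -(sum_deficit matchM cardM V0).
by rewrite [X in _ <= X](bigID (mem S)) leq_addr.
Qed.

End Incidence.

Section MatchingStructure.
Variables (V : finType) (e : rel V).
Hypotheses (e_irr : irreflexive e) (e_sym : symmetric e) (acyclic : ~ has_cycle e).
Variable M : {set {set V}}.
Hypotheses (matchM : two_matching e M) (cardM : #|M| = #|V| - 1).

Local Notation H := (medge e M).

Lemma incidence_longest_path_start w z t : [set w] \notin M ->
  longest_path H w z t -> incidence M z <= (t != [::]).
Proof.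
move=> wM lp; have [zt _ wt _] := lp.
have /two_matchingP[edgesM _] := matchM.
have nbr_z y : H z y -> y \in t /\ y = head z t.
  exact: (longest_path_start e_sym acyclic (medge_irr e_irr M)
           (medge_sym e_sym M) (@medge_sub V e M) lp).
have zM : [set z] \notin M.
  case: t zt wt {lp nbr_z} => [_|h t /= /andP[Hzh _] _].
    by rewrite inE => /eqP <-.
  by apply/negP => zM; have := loop_medge e_irr e_sym h matchM zM; rewrite Hzh.
rewrite (incidenceE e_irr e_sym z edgesM) (negbTE zM) add0n.
case: t nbr_z {zt wt lp} => [|h t] nbr_z.
  rewrite leqn0 cards_eq0; apply/eqP/setP => y; rewrite !inE.
  by apply/negP => /nbr_z[].
rewrite [X in _ <= X]/= -(cards1 h); apply/subset_leq_card/subsetP => y.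
by rewrite !inE => /nbr_z[_ ->].
Qed.

Lemma deficient_vertices w z t : 0 < #|V| -> [set w] \notin M ->
  longest_path H w z t -> [set x | incidence M x <= 1] = [set z; last z t].
Proof.
move=> V0 wM lp; have [_ ut _ _] := lp.
have [t' lp'] := longest_path_rev (medge_sym e_sym M) lp.
have iz := incidence_longest_path_start wM lp.
have il : incidence M (last z t) <= 1.
  exact: leq_trans (incidence_longest_path_start wM lp') (leq_b1 _).
apply/setP => x; rewrite !inE; apply/idP/orP => [ix|[] /eqP->]; last 2 first.
- exact: leq_trans iz (leq_b1 _).
- exact: il.
apply/orP/negPn/negP; rewrite negb_or => /andP[xz xl].
have := deficit_subset e_irr (x |: [set z; last z t]) matchM cardM V0.
rewrite big_setU1 /= ?in_set2 ?negb_or ?xz ?xl // /deficit.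
case: t {lp lp'} ut iz il xl => [_ /= iz _ _|h t ut /= iz il _].
  by rewrite setUid big_set1; lia.
have zl : z \notin [set last h t].
  by rewrite inE; apply: contraTneq ut => ->; rewrite /= mem_last.
by rewrite big_setU1 //= big_set1; lia.
Qed.

Lemma loop_free_on_longest_path w0 z0 t0 w : 0 < #|V| ->
  [set w0] \notin M -> longest_path H w0 z0 t0 -> [set w] \notin M -> w \in z0 :: t0.
Proof.
move=> V0 w0M lp0 wM; have [z [t lp]] := longest_path_exists H w.
have := deficient_vertices V0 w0M lp0; rewrite (deficient_vertices V0 wM lp).
have [zt ut wt _] := lp; have [zt0 ut0 _ _] := lp0.
have sub_e := @medge_sub V e M.
by move/(acyclic_path_ends e_sym acyclic (sub_path sub_e zt) ut
                            (sub_path sub_e zt0) ut0) <-.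
Qed.

Lemma two_matching_path_matching : 0 < #|V| ->
  exists u p, [/\ path e u p, uniq (u :: p) & M = path_matching u p].
Proof.
move=> V0.
have [w0 w0M] : exists w, [set w] \notin M.
  apply/existsP; rewrite -negb_forall; apply/negP => /forallP allM.
  have : #|V| <= #|M|.
    rewrite -(card_imset _ (@set1_inj V)); apply/subset_leq_card/subsetP.
    by move=> f /imsetP[w _ ->]; apply: allM.
  by rewrite cardM; lia.
have [z0 [t0 lp0]] := longest_path_exists H w0; have [zt0 ut0 _ _] := lp0.
have zt0e := sub_path (@medge_sub V e M) zt0.
exists z0, t0; split=> //; apply/eqP; rewrite eq_sym eqEcard.
rewrite (card_path_matching e_irr zt0e ut0) cardM leqnn andbT.
apply/subsetP => f /setUP[/(path_edgesP zt0)[x [y [/andP[_ xyM] ->]]] //|].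
case/loops_offP => w wt ->; apply: contraR wt.
exact: loop_free_on_longest_path V0 w0M lp0.
Qed.

End MatchingStructure.

Section Leaves.
Variables (V : finType) (e : rel V).
Hypotheses (e_irr : irreflexive e) (e_sym : symmetric e) (acyclic : ~ has_cycle e).

Lemma exists_nbr (u : V) : (forall x y, connect e x y) -> 1 < #|V| ->
  exists y, e u y.
Proof.
move=> conn V2; have [y yu] : exists y, y != u.
  apply/existsP; rewrite -negb_forall; apply/negP => /forallP allu.
  have : #|V| <= #|[set u]|.
    by apply/subset_leq_card/subsetP => y _; rewrite inE allu.
  by rewrite cards1; lia.
case/connectP: (conn u y) => -[_ /= yE|x s /= /andP[ux _] _]; last by exists x.
by rewrite yE eqxx in yu.
Qed.

Lemma leaf_start x q : path e x q -> uniq (x :: q) -> q != [::] ->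
  (forall y, e x y -> y \in x :: q) -> leaf e x.
Proof.
move=> xq ux qn nbr; apply/cards1P; exists (head x q); apply/setP => y.
rewrite !inE; apply/idP/eqP => [xy|->]; last by case: q xq qn {ux nbr} => //= h q /andP[].
have yq : y \in q.
  by move: (nbr y xy); rewrite in_cons => /orP[/eqP yx|//]; rewrite yx e_irr in xy.
by apply: (acyclic_nbr_on_path acyclic xq ux yq); rewrite e_sym.
Qed.

Lemma leaf_on_path x u p : leaf e x -> x \in u :: p -> path e u p ->
  uniq (u :: p) -> x = u \/ x = last u p.
Proof.
move=> lx; have [<-|xu] := eqVneq x u; first by left.
rewrite in_cons (negbTE xu) orFb => /splitPr[p1 [|h p2]].
  by right; rewrite cats1 last_rcons.
rewrite cat_path -cat_cons cat_uniq => /andP[_ /and3P[ex eh _]] /and3P[_ /hasPn nh _].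
move/cards1P: lx => [y0 nbrs].
have : last u p1 \in [set y | e x y] by rewrite inE e_sym.
have : h \in [set y | e x y] by rewrite inE.
rewrite nbrs !inE => /eqP hE /eqP lE.
by have := nh h; rewrite hE -lE mem_last !inE eqxx orbT => /(_ isT).
Qed.

Lemma minimal_path_matching_nbr u p x q w :
  path e u p -> uniq (u :: p) -> minimal_two_matching e (path_matching u p) ->
  path e x q -> uniq (x :: q) -> (x :: q) =i (u :: p) -> e x w -> w \in x :: q.
Proof.
move=> up uu [_ minM] xq ux eqxq xw; apply/negPn/negP => wxq; apply: minM.
have wxq_path : path e w (x :: q) by rewrite /= e_sym xw.
have wxq_uniq : uniq (w :: x :: q) by rewrite cons_uniq wxq ux.
exists (path_matching w (x :: q)); split.
- exact: path_matching_two_matching.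
- by rewrite !(card_path_matching e_irr) //.
rewrite !(loops_path_matching e_irr) //; apply: (loops_off_proper (w := w)).
- by move=> y; rewrite -eqxq => yxq; rewrite in_cons yxq orbT.
- exact: mem_head.
- by rewrite -eqxq.
Qed.

Lemma minimal_path_matching_leaves u p :
  (forall x y, connect e x y) -> 1 < #|V| -> path e u p -> uniq (u :: p) ->
  minimal_two_matching e (path_matching u p) ->
  [/\ leaf e u, leaf e (last u p) & u != last u p].
Proof.
move=> conn V2 up uu minM.
have nbr := minimal_path_matching_nbr up uu minM.
have pn : p != [::].
  have [y uy] := exists_nbr u conn V2.
  have := nbr u p y up uu (fun _ => erefl) uy.
  by case: (p) => //; rewrite inE => /eqP yu; rewrite yu e_irr in uy.
have [q [vq uq _ eqq sq]] := simple_path_rev e_sym up uu.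
have qn : q != [::] by rewrite -size_eq0 sq size_eq0.
split.
- by apply: (leaf_start up uu pn) => y; apply: nbr up uu (fun _ => erefl).
- by apply: (leaf_start vq uq qn) => y; apply: nbr vq uq eqq.
- have lp : last u p \in p by case: (p) pn => //= h t _; exact: mem_last.
  by apply: contraTneq lp => <-; case/andP: uu.
Qed.

Lemma leaves_path_matching_minimal u p :
  leaf e u -> leaf e (last u p) -> u != last u p -> path e u p -> uniq (u :: p) ->
  minimal_two_matching e (path_matching u p).
Proof.
move=> lu lv uv up uu; split; first exact: path_matching_two_matching.
case=> M' [matchM' cardM' properM'].
have V0 : 0 < #|V| by apply/card_gt0P; exists u.
rewrite (card_path_matching e_irr up uu) in cardM'.
have [u' [p' [up' uu' defM']]] :=
  two_matching_path_matching e_irr e_sym acyclic matchM' cardM' V0.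
move: properM'; rewrite defM' !(loops_path_matching e_irr) // => properM'.
have sub := loops_off_subset (proper_sub properM').
have ends : [set u; last u p] = [set u'; last u' p'].
  apply/eqP; rewrite eqEcard (cards2 u) uv (cards2 u') ltnS leq_b1 andbT.
  apply/subsetP => y /set2P[]-> ; rewrite in_set2.
  - by case: (leaf_on_path lu (sub u (mem_head _ _)) up' uu') => ->; rewrite eqxx ?orbT.
  - by case: (leaf_on_path lv (sub _ (mem_last u p)) up' uu') => ->; rewrite eqxx ?orbT.
have /eq_loops_off eqL := acyclic_path_ends e_sym acyclic up uu up' uu' ends.
by rewrite eqL properE subxx in properM'.
Qed.

End Leaves.

Theorem proposition4p9 (V : finType) (e : rel V) :
  is_tree e -> 2 <= #|V| ->
  forall M : {set {set V}},
    V2star e (#|V| - 1) M <->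
    exists (u v : V) (p : seq V),
      [/\ leaf e u, leaf e v, u != v, simple_path e u v p &
          M = path_edges u p :|: loops_off u p].
Proof.
move=> [[e_irr e_sym] conn acyclic] V2 M; split.
  case=> minM cardM; have [matchM _] := minM.
  have [u [p [up uu defM]]] :=
    two_matching_path_matching e_irr e_sym acyclic matchM cardM (ltnW V2).
  rewrite defM in minM.
  have [lu lv uv] :=
    minimal_path_matching_leaves e_irr e_sym acyclic conn V2 up uu minM.
  by exists u, (last u p), p; rewrite /simple_path up uu eqxx.
case=> u [v [p [lu lv uv /and3P[up /eqP pv uu] ->]]]; rewrite -pv in lv uv.
split; last exact: (card_path_matching e_irr up uu).
exact: leaves_path_matching_minimal.
Qed.
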